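(* Away from characteristic points of a regular surface $\Sigma\subset E(1,1)$, the mean curvature $\mathcal H_{\nabla^{1,\beta},L}:=\mathrm{tr}\,II^{\nabla^{1,\beta},L}$ satisfies $$\lim_{L\to+\infty}\mathcal H_{\nabla^{1,\beta},L}=X_1(\bar p)+X_2(\bar q).$$
   Context: The group $E(1,1)$ of rigid motions of the Minkowski plane is modeled on $\mathbb{R}^3$ with coordinates $(x_1,x_2,x_3)$. Put $X_1=\partial_{x_3}$, $X_2=\frac{1}{\sqrt2}(-e^{x_3}\partial_{x_1}+e^{-x_3}\partial_{x_2})$, $X_3=-\frac1{\sqrt2}(e^{x_3}\partial_{x_1}+e^{-x_3}\partial_{x_2})$, with dual coframe $\omega_1=dx_3$, $\omega_2=\frac1{\sqrt2}(-e^{-x_3}dx_1+e^{x_3}dx_2)$, $\omega=-\frac1{\sqrt2}(e^{-x_3}dx_1+e^{x_3}dx_2)$. For a constant $L>0$, $g_L=\omega_1\otimes\omega_1+\omega_2\otimes\omega_2+L\,\omega\otimes\omega$, so $X_1,X_2,\widetilde X_3:=L^{-1/2}X_3$ is $g_L$-orthonormal; $\langle\cdot,\cdot\rangle_L$ denotes $g_L$ and $\nabla$ its Levi-Civita connection. Let $P^1$, $P^{1,\perp}$ be the $g_L$-orthogonal projections onto $\mathrm{span}\{X_1,X_2\}$ and onto $\mathrm{span}\{X_3\}$. For a real constant $\beta$, $\nabla^{1,\beta}_XY=(1-\beta)\nabla_XY+\beta P^1\nabla_X(P^1Y)+\beta P^{1,\perp}\nabla_X(P^{1,\perp}Y)$.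 A regular surface is a Euclidean $C^2$-smooth compact oriented surface $\Sigma=\{u=0\}$ with $u$ Euclidean $C^2$ and nonvanishing Euclidean gradient; $\nabla_Hu=X_1(u)X_1+X_2(u)X_2$; characteristic points are those with $\nabla_Hu=0$. Put $p=X_1u$, $q=X_2u$, $r=\widetilde X_3u$, $l=\sqrt{p^2+q^2}$, $l_L=\sqrt{p^2+q^2+r^2}$, $\bar p=p/l$, $\bar q=q/l$, $\bar p_L=p/l_L$, $\bar q_L=q/l_L$, $\bar r_L=r/l_L$; $v_L=\bar p_LX_1+\bar q_LX_2+\bar r_L\widetilde X_3$, $e_1=\bar qX_1-\bar pX_2$, $e_2=\bar r_L\bar pX_1+\bar r_L\bar qX_2-\frac{l}{l_L}\widetilde X_3$. The second fundamental form is $II^{\nabla^{1,\beta},L}=(\langle\nabla^{1,\beta}_{e_i}v_L,e_j\rangle_L)_{i,j=1,2}$. *)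

From Stdlib Require Import Reals List.
From Coquelicot Require Import Coquelicot.
Open Scope R_scope.

(* Points of E(1,1) = R^3 with coordinates (x1,x2,x3); also used for Euclidean
   components of tangent vectors (the vector a1 d_x1 + a2 d_x2 + a3 d_x3). *)
Definition pt : Type := (R * R * R)%type.
Definition c1 (x : pt) : R := fst (fst x).
Definition c2 (x : pt) : R := snd (fst x).
Definition c3 (x : pt) : R := snd x.
Definition mk (a b c : R) : pt := (a, b, c).

(* coordinate i (1,2,3; anything else = 3) *)
Definition coord (i : nat) (x : pt) : R :=
  match i with 1%nat => c1 x | 2%nat => c2 x | _ => c3 x end.
Definition upd (i : nat) (x : pt) (t : R) : pt :=
  match i with
  | 1%nat => mk t (c2 x) (c3 x)
  | 2%nat => mk (c1 x) t (c3 x)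
  | _ => mk (c1 x) (c2 x) t
  end.

Definition partial (i : nat) (f : pt -> R) (x : pt) : R :=
  Derive (fun t => f (upd i x t)) (coord i x).

Definition C2_on (U : pt -> Prop) (u : pt -> R) : Prop :=
  forall x, U x ->
    continuous u x /\
    (forall i, (1 <= i <= 3)%nat ->
       ex_derive (fun t => u (upd i x t)) (coord i x) /\
       continuous (partial i u) x /\
       (forall j, (1 <= j <= 3)%nat ->
          ex_derive (fun t => partial i u (upd j x t)) (coord j x) /\
          continuous (partial j (partial i u)) x)).

Definition compact_set (K : pt -> Prop) : Prop :=
  forall (I : Type) (O : I -> pt -> Prop),
    (forall i, open (O i)) ->
    (forall x, K x -> exists i, O i x) ->
    exists l : list I, forall x, K x -> exists i, In i l /\ O i x.

Definition egrad_nonzero (u : pt -> R) (x : pt) : Prop :=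
  ~ (partial 1 u x = 0 /\ partial 2 u x = 0 /\ partial 3 u x = 0).

(* vector fields, in Euclidean components *)
Definition vfield := pt -> pt.
Definition vadd (V W : vfield) : vfield :=
  fun x => mk (c1 (V x) + c1 (W x)) (c2 (V x) + c2 (W x)) (c3 (V x) + c3 (W x)).
Definition vsc (f : pt -> R) (V : vfield) : vfield :=
  fun x => mk (f x * c1 (V x)) (f x * c2 (V x)) (f x * c3 (V x)).

Definition act (X : vfield) (f : pt -> R) : pt -> R :=
  fun x => c1 (X x) * partial 1 f x + c2 (X x) * partial 2 f x + c3 (X x) * partial 3 f x.

Definition bracket (X Y : vfield) : vfield :=
  fun x => mk (act X (fun y => c1 (Y y)) x - act Y (fun y => c1 (X y)) x)
              (act X (fun y => c2 (Y y)) x - act Y (fun y => c2 (X y)) x)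
              (act X (fun y => c3 (Y y)) x - act Y (fun y => c3 (X y)) x).

Definition X1 : vfield := fun x => mk 0 0 1.
Definition X2 : vfield := fun x =>
  mk (- exp (c3 x) / sqrt 2) (exp (- c3 x) / sqrt 2) 0.
Definition X3 : vfield := fun x =>
  mk (- exp (c3 x) / sqrt 2) (- exp (- c3 x) / sqrt 2) 0.
Definition X3t (L : R) : vfield := vsc (fun _ => / sqrt L) X3.

Definition om1 (x v : pt) : R := c3 v.
Definition om2 (x v : pt) : R := (- exp (- c3 x) * c1 v + exp (c3 x) * c2 v) / sqrt 2.
Definition om3 (x v : pt) : R := - (exp (- c3 x) * c1 v + exp (c3 x) * c2 v) / sqrt 2.

Definition gL (L : R) (V W : vfield) : pt -> R :=
  fun x => om1 x (V x) * om1 x (W x) + om2 x (V x) * om2 x (W x)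
           + L * (om3 x (V x) * om3 x (W x)).

(* Koszul expression: equals 2 g_L(nabla_X Y, Z) for the Levi-Civita connection *)
Definition koszul (L : R) (X Y Z : vfield) : pt -> R :=
  fun x => act X (gL L Y Z) x + act Y (gL L X Z) x - act Z (gL L X Y) x
           + gL L (bracket X Y) Z x - gL L (bracket X Z) Y x - gL L (bracket Y Z) X x.

(* Levi-Civita connection of g_L, expanded in the g_L-orthonormal frame X1, X2, X3t *)
Definition nablaLC (L : R) (X Y : vfield) : vfield :=
  vadd (vsc (fun x => / 2 * koszul L X Y X1 x) X1)
   (vadd (vsc (fun x => / 2 * koszul L X Y X2 x) X2)
         (vsc (fun x => / 2 * koszul L X Y (X3t L) x) (X3t L))).

Definition P1 (L : R) (Y : vfield) : vfield :=
  vadd (vsc (gL L Y X1) X1) (vsc (gL L Y X2) X2).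
Definition P1perp (L : R) (Y : vfield) : vfield :=
  vsc (gL L Y (X3t L)) (X3t L).

Definition nabla1b (L beta : R) (X Y : vfield) : vfield :=
  vadd (vsc (fun _ => 1 - beta) (nablaLC L X Y))
   (vadd (vsc (fun _ => beta) (P1 L (nablaLC L X (P1 L Y))))
         (vsc (fun _ => beta) (P1perp L (nablaLC L X (P1perp L Y))))).

Section Quantities.
Variables (L : R) (u : pt -> R).
Definition pp : pt -> R := act X1 u.
Definition qq : pt -> R := act X2 u.
Definition rr : pt -> R := act (X3t L) u.
Definition ll : pt -> R := fun x => sqrt (pp x ^ 2 + qq x ^ 2).
Definition lL : pt -> R := fun x => sqrt (pp x ^ 2 + qq x ^ 2 + rr x ^ 2).
Definition pbar : pt -> R := fun x => pp x / ll x.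
Definition qbar : pt -> R := fun x => qq x / ll x.
Definition pbarL : pt -> R := fun x => pp x / lL x.
Definition qbarL : pt -> R := fun x => qq x / lL x.
Definition rbarL : pt -> R := fun x => rr x / lL x.
Definition vL : vfield :=
  vadd (vsc pbarL X1) (vadd (vsc qbarL X2) (vsc rbarL (X3t L))).
Definition e1 : vfield := vadd (vsc qbar X1) (vsc (fun x => - pbar x) X2).
Definition e2 : vfield :=
  vadd (vsc (fun x => rbarL x * pbar x) X1)
   (vadd (vsc (fun x => rbarL x * qbar x) X2)
         (vsc (fun x => - (ll x / lL x)) (X3t L))).
End Quantities.

Definition meanH (L beta : R) (u : pt -> R) (x : pt) : R :=
  gL L (nabla1b L beta (e1 u) (vL L u)) (e1 u) x
  + gL L (nabla1b L beta (e2 L u) (vL L u)) (e2 L u) x.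

(* Every vector field is written in the g_L-orthonormal frame
   X1, X2, X3t = L^{-1/2} X3 as  frame L a1 a2 a3 = a1 X1 + a2 X2 + a3 X3t.
   (1) In frame components g_L is the Euclidean dot product.
   (2) The frame brackets have constant coefficients (lam = sqrt L), so the
       Koszul formula and the definition of nabla^{1,beta} give
         <nabla^{1,beta}_A B, A>_L = sum_k A(b_k) a_k + conn_form lam beta a b
       with an explicit cubic polynomial conn_form.
   (3) Since e1, e2, v_L are g_L-orthonormal and |v_L| = 1, the trace over
       {e1, e2} turns the derivative part into the frame divergence
       X1(pbarL) + X2(qbarL) + X3t(rbarL) of v_L, and the conn_form terms
       cancel exactly (the averaged coefficient (lam + 1/lam)/2 produced by the
       projections is what makes them cancel).
   (4) Expanding that divergence with the quotient rule gives
       H_L = H_profile(1/L) for an explicit function H_profile that is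
       differentiable at 0 because p^2 + q^2 > 0, with
       H_profile(0) = X1(pbar) + X2(qbar); the limit follows by continuity.
   The lemmas only assume that the first partials of u are differentiable at
   the point. *)

From Pilot Require Import Defs.
From Stdlib Require Import Reals Lra Lia FunctionalExtensionality.
From Coquelicot Require Import Coquelicot.
Open Scope R_scope.

Lemma upd_coord j x : (1 <= j <= 3)%nat -> upd j x (coord j x) = x.
Proof.
  intros Hj; destruct x as [[a b] c].
  destruct j as [|[|[|[|j]]]]; try lia; reflexivity.
Qed.

Definition has_partials (x : pt) (f : pt -> R) : Prop :=
  forall j, (1 <= j <= 3)%nat -> ex_derive (fun t => f (upd j x t)) (coord j x).

Lemma C2_on_partials U u x : C2_on U u -> U x ->
  forall k, (1 <= k <= 3)%nat -> has_partials x (partial k u).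
Proof.
  intros HC HU k Hk j Hj. destruct (HC x HU) as [_ H]. destruct (H k Hk) as [_ [_ H2]].
  exact (proj1 (H2 j Hj)).
Qed.

Section PartialCalculus.
Variable x : pt.

Lemma has_partials_const c : has_partials x (fun _ => c).
Proof. intros j _. apply ex_derive_const. Qed.

Lemma partial_const c j : partial j (fun _ => c) x = 0.
Proof. unfold partial. apply Derive_const. Qed.

Lemma has_partials_plus f g :
  has_partials x f -> has_partials x g -> has_partials x (fun y => f y + g y).
Proof. intros Hf Hg j Hj. apply (ex_derive_plus (fun t => f (upd j x t))); auto. Qed.

Lemma partial_plus f g j : has_partials x f -> has_partials x g -> (1 <= j <= 3)%nat ->
  partial j (fun y => f y + g y) x = partial j f x + partial j g x.
Proof. intros Hf Hg Hj. unfold partial. apply (Derive_plus (fun t => f (upd j x t))); auto. Qed.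

Lemma has_partials_opp f : has_partials x f -> has_partials x (fun y => - f y).
Proof. intros Hf j Hj. apply (ex_derive_opp (fun t => f (upd j x t))); auto. Qed.

Lemma partial_opp f j : partial j (fun y => - f y) x = - partial j f x.
Proof. unfold partial. apply (Derive_opp (fun t => f (upd j x t))). Qed.

Lemma has_partials_mult f g :
  has_partials x f -> has_partials x g -> has_partials x (fun y => f y * g y).
Proof. intros Hf Hg j Hj. apply (ex_derive_mult (fun t => f (upd j x t))); auto. Qed.

Lemma partial_mult f g j : has_partials x f -> has_partials x g -> (1 <= j <= 3)%nat ->
  partial j (fun y => f y * g y) x = partial j f x * g x + f x * partial j g x.
Proof.
  intros Hf Hg Hj. unfold partial.
  rewrite (Derive_mult (fun t => f (upd j x t))), upd_coord; auto.
Qed.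

Lemma has_partials_div f g : has_partials x f -> has_partials x g -> g x <> 0 ->
  has_partials x (fun y => f y / g y).
Proof.
  intros Hf Hg Hg0 j Hj.
  apply (ex_derive_div (fun t => f (upd j x t))); rewrite ?upd_coord; auto.
Qed.

Lemma partial_div f g j : has_partials x f -> has_partials x g -> g x <> 0 ->
  (1 <= j <= 3)%nat ->
  partial j (fun y => f y / g y) x = (partial j f x * g x - f x * partial j g x) / g x ^ 2.
Proof.
  intros Hf Hg Hg0 Hj. unfold partial.
  rewrite (Derive_div (fun t => f (upd j x t))); rewrite ?upd_coord; auto.
Qed.

Lemma has_partials_pow f n : has_partials x f -> has_partials x (fun y => f y ^ n).
Proof. intros Hf j Hj. apply (ex_derive_pow (fun t => f (upd j x t))); auto. Qed.

Lemma partial_sq f j : has_partials x f -> (1 <= j <= 3)%nat ->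
  partial j (fun y => f y ^ 2) x = 2 * f x * partial j f x.
Proof.
  intros Hf Hj. unfold partial.
  rewrite (Derive_pow (fun t => f (upd j x t))), upd_coord; auto. simpl; ring.
Qed.

Lemma has_partials_sqrt f : has_partials x f -> 0 < f x -> has_partials x (fun y => sqrt (f y)).
Proof.
  intros Hf Hpos j Hj. destruct (Hf j Hj) as [df Hd].
  exists (df / (2 * sqrt (f (upd j x (coord j x))))).
  apply (is_derive_sqrt (fun t => f (upd j x t))); rewrite ?upd_coord; auto.
Qed.

Lemma partial_sqrt f j : has_partials x f -> 0 < f x -> (1 <= j <= 3)%nat ->
  partial j (fun y => sqrt (f y)) x = partial j f x / (2 * sqrt (f x)).
Proof.
  intros Hf Hpos Hj. unfold partial. destruct (Hf j Hj) as [df Hd].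
  replace (Derive (fun t => f (upd j x t)) (coord j x)) with df
    by (symmetry; apply is_derive_unique; exact Hd).
  apply is_derive_unique.
  replace (f x) with (f (upd j x (coord j x))) by (rewrite upd_coord; auto).
  apply (is_derive_sqrt (fun t => f (upd j x t))); rewrite ?upd_coord; auto.
Qed.

End PartialCalculus.

Section DirectionalCalculus.
Variables (x : pt) (V : vfield).

Lemma act_const c : act V (fun _ => c) x = 0.
Proof. unfold act. rewrite !partial_const. ring. Qed.

Lemma act_plus f g : has_partials x f -> has_partials x g ->
  act V (fun y => f y + g y) x = act V f x + act V g x.
Proof. intros. unfold act. rewrite !partial_plus by (auto; lia). ring. Qed.

Lemma act_opp f : act V (fun y => - f y) x = - act V f x.
Proof. unfold act. rewrite !partial_opp. ring. Qed.

Lemma act_mult f g : has_partials x f -> has_partials x g ->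
  act V (fun y => f y * g y) x = act V f x * g x + f x * act V g x.
Proof. intros. unfold act. rewrite !partial_mult by (auto; lia). ring. Qed.

Lemma act_div f g : has_partials x f -> has_partials x g -> g x <> 0 ->
  act V (fun y => f y / g y) x = (act V f x * g x - f x * act V g x) / g x ^ 2.
Proof. intros. unfold act. rewrite !partial_div by (auto; lia). field. auto. Qed.

Lemma act_sq f : has_partials x f -> act V (fun y => f y ^ 2) x = 2 * f x * act V f x.
Proof. intros. unfold act. rewrite !partial_sq by (auto; lia). ring. Qed.

Lemma act_sqrt f : has_partials x f -> 0 < f x ->
  act V (fun y => sqrt (f y)) x = act V f x / (2 * sqrt (f x)).
Proof.
  intros Hf Hpos. unfold act. rewrite !partial_sqrt by (auto; lia).
  assert (0 < sqrt (f x)) by (apply sqrt_lt_R0; auto). field. lra.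
Qed.

End DirectionalCalculus.

(* The coefficients exp(+-x3) of the frame depend on x3 only. *)
Lemma has_partials_exp3 x : has_partials x (fun y => exp (c3 y)).
Proof.
  intros j Hj. destruct j as [|[|[|[|j]]]]; try lia; simpl; try apply ex_derive_const.
  exists (exp (c3 x)). apply is_derive_exp.
Qed.

Lemma has_partials_expm3 x : has_partials x (fun y => exp (- c3 y)).
Proof.
  intros j Hj. destruct j as [|[|[|[|j]]]]; try lia; simpl; try apply ex_derive_const.
  apply (ex_derive_comp exp (fun t => - t)).
  - exists (exp (- c3 x)). apply is_derive_exp.
  - exists (-1). auto_derive; auto.
Qed.

Lemma act_exp3 x V : act V (fun y => exp (c3 y)) x = c3 (V x) * exp (c3 x).
Proof.
  unfold act, partial. simpl. rewrite !Derive_const.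
  replace (Derive (fun t => exp t) (c3 x)) with (exp (c3 x))
    by (symmetry; apply is_derive_unique, is_derive_exp).
  ring.
Qed.

Lemma act_expm3 x V : act V (fun y => exp (- c3 y)) x = - c3 (V x) * exp (- c3 x).
Proof.
  unfold act, partial. simpl. rewrite !Derive_const.
  replace (Derive (fun t => exp (- t)) (c3 x)) with (- exp (- c3 x))
    by (symmetry; apply is_derive_unique; auto_derive; auto; ring).
  ring.
Qed.

Definition frame (L : R) (a1 a2 a3 : pt -> R) : vfield :=
  vadd (vsc a1 X1) (vadd (vsc a2 X2) (vsc a3 (X3t L))).

Definition frame_at (L : R) (y : pt) (b1 b2 b3 : R) : pt :=
  frame L (fun _ => b1) (fun _ => b2) (fun _ => b3) y.
Definition gL_at (L : R) (y v w : pt) : R :=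
  om1 y v * om1 y w + om2 y v * om2 y w + L * (om3 y v * om3 y w).

Lemma gL_at_eq L V W y : gL L V W y = gL_at L y (V y) (W y).
Proof. reflexivity. Qed.

Ltac unfold_frame :=
  cbv [om1 om2 om3 frame_at frame vadd vsc X1 X2 X3t X3 mk Defs.c1 c2 c3 fst snd].

Lemma pt_eq (a b : pt) : Defs.c1 a = Defs.c1 b -> c2 a = c2 b -> c3 a = c3 b -> a = b.
Proof.
  destruct a as [[a1 a2] a3], b as [[b1 b2] b3]. cbv [Defs.c1 c2 c3 fst snd].
  intros; subst; reflexivity.
Qed.

Lemma sqrt2_pos : 0 < sqrt 2.
Proof. apply sqrt_lt_R0. lra. Qed.

Lemma om1_frame L y b1 b2 b3 : om1 y (frame_at L y b1 b2 b3) = b1.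
Proof. unfold_frame. ring. Qed.

Lemma om2_frame L y b1 b2 b3 : 0 < L -> om2 y (frame_at L y b1 b2 b3) = b2.
Proof.
  intros HL. unfold_frame. destruct y as [[y1 y2] t].
  pose proof sqrt2_pos. pose proof (sqrt_sqrt 2 ltac:(lra)) as E2.
  assert (0 < sqrt L) by (apply sqrt_lt_R0; auto).
  assert (exp t > 0) by apply exp_pos.
  rewrite exp_Ropp.
  transitivity (b2 * (2 / (sqrt 2 * sqrt 2))); [field; lra | rewrite E2; field].
Qed.

Lemma om3_frame L y b1 b2 b3 : 0 < L -> om3 y (frame_at L y b1 b2 b3) = b3 / sqrt L.
Proof.
  intros HL. unfold_frame. destruct y as [[y1 y2] t].
  pose proof sqrt2_pos. pose proof (sqrt_sqrt 2 ltac:(lra)) as E2.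
  assert (0 < sqrt L) by (apply sqrt_lt_R0; auto).
  assert (exp t > 0) by apply exp_pos.
  rewrite exp_Ropp.
  transitivity (b3 / sqrt L * (2 / (sqrt 2 * sqrt 2))); [field; lra | rewrite E2; field; lra].
Qed.

Lemma gL_at_frame L y b1 b2 b3 d1 d2 d3 : 0 < L ->
  gL_at L y (frame_at L y b1 b2 b3) (frame_at L y d1 d2 d3) = b1 * d1 + b2 * d2 + b3 * d3.
Proof.
  intros HL. unfold gL_at. rewrite !om1_frame, !om2_frame, !om3_frame by auto.
  assert (0 < sqrt L) by (apply sqrt_lt_R0; auto).
  pose proof (sqrt_sqrt L (Rlt_le _ _ HL)) as EL.
  rewrite <- EL at 1. field. lra.
Qed.

Lemma gL_frame L a1 a2 a3 b1 b2 b3 : 0 < L ->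
  gL L (frame L a1 a2 a3) (frame L b1 b2 b3) = fun y => a1 y * b1 y + a2 y * b2 y + a3 y * b3 y.
Proof.
  intros HL. apply functional_extensionality. intro y.
  exact (gL_at_frame L y (a1 y) (a2 y) (a3 y) (b1 y) (b2 y) (b3 y) HL).
Qed.

Lemma X1_frame L : X1 = frame L (fun _ => 1) (fun _ => 0) (fun _ => 0).
Proof. apply functional_extensionality; intros [[y1 y2] y3]; apply pt_eq; unfold_frame; ring. Qed.
Lemma X2_frame L : X2 = frame L (fun _ => 0) (fun _ => 1) (fun _ => 0).
Proof. apply functional_extensionality; intros [[y1 y2] y3]; apply pt_eq; unfold_frame; ring. Qed.
Lemma X3t_frame L : X3t L = frame L (fun _ => 0) (fun _ => 0) (fun _ => 1).
Proof. apply functional_extensionality; intros [[y1 y2] y3]; apply pt_eq; unfold_frame; ring. Qed.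

Lemma act_frame L a1 a2 a3 f x :
  act (frame L a1 a2 a3) f x = a1 x * act X1 f x + a2 x * act X2 f x + a3 x * act (X3t L) f x.
Proof. unfold act; unfold_frame; ring. Qed.

(* Euclidean components of a frame field, needed to differentiate them in a bracket. *)
Lemma c1_frame L b1 b2 b3 : (fun y => Defs.c1 (frame L b1 b2 b3 y)) =
  fun y => b2 y * (- exp (c3 y) / sqrt 2) + b3 y * (/ sqrt L * (- exp (c3 y) / sqrt 2)).
Proof. apply functional_extensionality; intros [[y1 y2] y3]; unfold_frame; ring. Qed.
Lemma c2_frame L b1 b2 b3 : (fun y => c2 (frame L b1 b2 b3 y)) =
  fun y => b2 y * (exp (- c3 y) / sqrt 2) + b3 y * (/ sqrt L * (- exp (- c3 y) / sqrt 2)).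
Proof. apply functional_extensionality; intros [[y1 y2] y3]; unfold_frame; ring. Qed.
Lemma c3_frame L b1 b2 b3 : (fun y => c3 (frame L b1 b2 b3 y)) = b1.
Proof. apply functional_extensionality; intros [[y1 y2] y3]; unfold_frame; ring. Qed.
Lemma c3_frame_pt L b1 b2 b3 y : c3 (frame L b1 b2 b3 y) = b1 y.
Proof. destruct y as [[y1 y2] y3]; unfold_frame; ring. Qed.

(* From here on derivatives are computed with the calculus lemmas, never by unfolding. *)
Opaque has_partials act partial.

Ltac smooth_tac := cbv beta; repeat (first [
  assumption | apply has_partials_const | apply has_partials_exp3 | apply has_partials_expm3
  | apply has_partials_div | apply has_partials_plus | apply has_partials_opp
  | apply has_partials_mult | apply has_partials_pow ]).

Ltac nonzero_tac := cbv beta; first [ assumption | apply Rgt_not_eq, sqrt2_pos | lra ].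

Ltac side_tac := first [ solve [smooth_tac] | smooth_tac; nonzero_tac | nonzero_tac ].

Ltac act_step := first [
    rewrite act_const | rewrite act_exp3 | rewrite act_expm3
  | rewrite act_div by side_tac | rewrite act_plus by side_tac | rewrite act_opp
  | rewrite act_mult by side_tac | rewrite act_sq by side_tac ].

(* Brackets in the frame: the derivative part plus the structure constants
   [X1,X2] = lam X3t, [X1,X3t] = lam^-1 X2 (lam = sqrt L), [X2,X3t] = 0. *)
Lemma bracket_frame L x a1 a2 a3 b1 b2 b3 : 0 < L ->
  has_partials x a1 -> has_partials x a2 -> has_partials x a3 ->
  has_partials x b1 -> has_partials x b2 -> has_partials x b3 ->
  bracket (frame L a1 a2 a3) (frame L b1 b2 b3) x =
  frame_at L x
    (act (frame L a1 a2 a3) b1 x - act (frame L b1 b2 b3) a1 x)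
    (act (frame L a1 a2 a3) b2 x - act (frame L b1 b2 b3) a2 x
       + (a1 x * b3 x - a3 x * b1 x) / sqrt L)
    (act (frame L a1 a2 a3) b3 x - act (frame L b1 b2 b3) a3 x
       + sqrt L * (a1 x * b2 x - a2 x * b1 x)).
Proof.
  intros HL Ha1 Ha2 Ha3 Hb1 Hb2 Hb3.
  assert (HsL : 0 < sqrt L) by (apply sqrt_lt_R0; auto).
  pose proof sqrt2_pos.
  unfold bracket. rewrite !c1_frame, !c2_frame, !c3_frame.
  apply pt_eq; cbv [mk Defs.c1 c2 c3 fst snd].
  - repeat act_step. rewrite !c3_frame_pt.
    destruct x as [[y1 y2] y3]. unfold_frame. field. lra.
  - repeat act_step. rewrite !c3_frame_pt.
    destruct x as [[y1 y2] y3]. unfold_frame. field. lra.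
  - destruct x as [[y1 y2] y3]. unfold_frame. ring.
Qed.

(* g_L of the constant part of [A,B] against D, for frame components a, b, d. *)
Definition bracket_form (lam a1 a2 a3 b1 b2 b3 d2 d3 : R) : R :=
  lam * (a1 * b2 - a2 * b1) * d3 + / lam * (a1 * b3 - a3 * b1) * d2.

Lemma koszul_frame L x a1 a2 a3 b1 b2 b3 d1 d2 d3 : 0 < L ->
  has_partials x a1 -> has_partials x a2 -> has_partials x a3 ->
  has_partials x b1 -> has_partials x b2 -> has_partials x b3 ->
  has_partials x d1 -> has_partials x d2 -> has_partials x d3 ->
  koszul L (frame L a1 a2 a3) (frame L b1 b2 b3) (frame L d1 d2 d3) x =
  2 * (act (frame L a1 a2 a3) b1 x * d1 x + act (frame L a1 a2 a3) b2 x * d2 x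
       + act (frame L a1 a2 a3) b3 x * d3 x)
  + bracket_form (sqrt L) (a1 x) (a2 x) (a3 x) (b1 x) (b2 x) (b3 x) (d2 x) (d3 x)
  - bracket_form (sqrt L) (a1 x) (a2 x) (a3 x) (d1 x) (d2 x) (d3 x) (b2 x) (b3 x)
  - bracket_form (sqrt L) (b1 x) (b2 x) (b3 x) (d1 x) (d2 x) (d3 x) (a2 x) (a3 x).
Proof.
  intros HL Ha1 Ha2 Ha3 Hb1 Hb2 Hb3 Hd1 Hd2 Hd3.
  assert (HsL : 0 < sqrt L) by (apply sqrt_lt_R0; auto).
  unfold koszul. rewrite !gL_frame by auto. rewrite !gL_at_eq, !bracket_frame by auto.
  change (frame L a1 a2 a3 x) with (frame_at L x (a1 x) (a2 x) (a3 x)).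
  change (frame L b1 b2 b3 x) with (frame_at L x (b1 x) (b2 x) (b3 x)).
  change (frame L d1 d2 d3 x) with (frame_at L x (d1 x) (d2 x) (d3 x)).
  rewrite !gL_at_frame by auto.
  repeat act_step.
  unfold bracket_form. field. lra.
Qed.

Lemma gL_vadd L V W Z y : gL L (vadd V W) Z y = gL L V Z y + gL L W Z y.
Proof. unfold gL, om1, om2, om3, vadd; cbv [mk Defs.c1 c2 c3 fst snd]. unfold Rdiv. ring. Qed.
Lemma gL_vsc L f V Z y : gL L (vsc f V) Z y = f y * gL L V Z y.
Proof. unfold gL, om1, om2, om3, vsc; cbv [mk Defs.c1 c2 c3 fst snd]. unfold Rdiv. ring. Qed.

Lemma P1_frame L V : P1 L V = frame L (gL L V X1) (gL L V X2) (fun _ => 0).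
Proof. apply functional_extensionality; intros [[y1 y2] y3]; apply pt_eq; unfold P1; unfold_frame; ring. Qed.
Lemma P1perp_frame L V : P1perp L V = frame L (fun _ => 0) (fun _ => 0) (gL L V (X3t L)).
Proof. apply functional_extensionality; intros [[y1 y2] y3]; apply pt_eq; unfold P1perp; unfold_frame; ring. Qed.

Lemma gL_frame_X1 L b1 b2 b3 : 0 < L -> gL L (frame L b1 b2 b3) X1 = b1.
Proof.
  intros. rewrite (X1_frame L), gL_frame by auto.
  apply functional_extensionality; intro y. ring.
Qed.
Lemma gL_frame_X2 L b1 b2 b3 : 0 < L -> gL L (frame L b1 b2 b3) X2 = b2.
Proof.
  intros. rewrite (X2_frame L), gL_frame by auto.
  apply functional_extensionality; intro y. ring.
Qed.
Lemma gL_frame_X3t L b1 b2 b3 : 0 < L -> gL L (frame L b1 b2 b3) (X3t L) = b3.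
Proof.
  intros. rewrite (X3t_frame L), gL_frame by auto.
  apply functional_extensionality; intro y. ring.
Qed.

Lemma gL_nablaLC_frame L x X Y d1 d2 d3 : 0 < L ->
  gL L (nablaLC L X Y) (frame L d1 d2 d3) x =
  / 2 * koszul L X Y X1 x * d1 x + / 2 * koszul L X Y X2 x * d2 x
  + / 2 * koszul L X Y (X3t L) x * d3 x.
Proof.
  intros HL. rewrite gL_at_eq.
  change (nablaLC L X Y x) with (frame_at L x (/ 2 * koszul L X Y X1 x)
    (/ 2 * koszul L X Y X2 x) (/ 2 * koszul L X Y (X3t L) x)).
  change (frame L d1 d2 d3 x) with (frame_at L x (d1 x) (d2 x) (d3 x)).
  rewrite gL_at_frame by auto. ring.
Qed.

(* The non-derivative part of <nabla^{1,beta}_A B, A>_L, with lam = sqrt L. *)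
Definition conn_form (lam beta a1 a2 a3 b1 b2 b3 : R) : R :=
  (1 - beta) * / lam * b3 * a1 * a2
  + ((1 - beta) * lam + beta * ((lam + / lam) / 2)) * b2 * a1 * a3
  - (2 - beta) * ((lam + / lam) / 2) * b1 * a2 * a3.

Lemma nabla1b_diag L beta x a1 a2 a3 b1 b2 b3 : 0 < L ->
  has_partials x a1 -> has_partials x a2 -> has_partials x a3 ->
  has_partials x b1 -> has_partials x b2 -> has_partials x b3 ->
  gL L (nabla1b L beta (frame L a1 a2 a3) (frame L b1 b2 b3)) (frame L a1 a2 a3) x =
  act (frame L a1 a2 a3) b1 x * a1 x + act (frame L a1 a2 a3) b2 x * a2 x
  + act (frame L a1 a2 a3) b3 x * a3 x
  + conn_form (sqrt L) beta (a1 x) (a2 x) (a3 x) (b1 x) (b2 x) (b3 x).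
Proof.
  intros HL Ha1 Ha2 Ha3 Hb1 Hb2 Hb3.
  assert (HsL : 0 < sqrt L) by (apply sqrt_lt_R0; auto).
  unfold nabla1b. rewrite !gL_vadd, !gL_vsc, !P1_frame, !P1perp_frame.
  rewrite !gL_frame_X1, !gL_frame_X2, !gL_frame_X3t, !gL_frame by auto. cbv beta.
  rewrite (X1_frame L), (X2_frame L), (X3t_frame L), !gL_nablaLC_frame by auto.
  (* the Koszul terms test against X1, X2, X3t, which are frame fields too *)
  rewrite (X1_frame L), (X2_frame L), (X3t_frame L).
  rewrite !koszul_frame by (auto; apply has_partials_const).
  rewrite ?act_const. unfold bracket_form, conn_form. field. lra.
Qed.

Definition quad (M11 M12 M13 M21 M22 M23 M31 M32 M33 a1 a2 a3 : R) : R :=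
  M11*a1*a1 + M12*a1*a2 + M13*a1*a3 + M21*a2*a1 + M22*a2*a2 + M23*a2*a3
  + M31*a3*a1 + M32*a3*a2 + M33*a3*a3.

Lemma quad_trace_orthonormal M11 M12 M13 M21 M22 M23 M31 M32 M33
    a1 a2 a3 b1 b2 b3 v1 v2 v3 :
  a1*a1 + b1*b1 + v1*v1 = 1 -> a2*a2 + b2*b2 + v2*v2 = 1 -> a3*a3 + b3*b3 + v3*v3 = 1 ->
  a1*a2 + b1*b2 + v1*v2 = 0 -> a1*a3 + b1*b3 + v1*v3 = 0 -> a2*a3 + b2*b3 + v2*v3 = 0 ->
  quad M11 M12 M13 M21 M22 M23 M31 M32 M33 a1 a2 a3
  + quad M11 M12 M13 M21 M22 M23 M31 M32 M33 b1 b2 b3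
  = M11 + M22 + M33 - quad M11 M12 M13 M21 M22 M23 M31 M32 M33 v1 v2 v3.
Proof.
  intros H11 H22 H33 H12 H13 H23.
  transitivity (M11 * (a1*a1 + b1*b1 + v1*v1) + M22 * (a2*a2 + b2*b2 + v2*v2)
    + M33 * (a3*a3 + b3*b3 + v3*v3) + (M12 + M21) * (a1*a2 + b1*b2 + v1*v2)
    + (M13 + M31) * (a1*a3 + b1*b3 + v1*v3) + (M23 + M32) * (a2*a3 + b2*b3 + v2*v3)
    - quad M11 M12 M13 M21 M22 M23 M31 M32 M33 v1 v2 v3).
  - unfold quad. ring.
  - rewrite H11, H22, H33, H12, H13, H23. ring.
Qed.

(* <nabla^{1,beta}_A v, A>_L in terms of the components a of A, v of v and the
   frame derivatives Dij = X_i(v_j) (right-hand side of [nabla1b_diag]). *)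
Definition diag_term lam beta a1 a2 a3 v1 v2 v3 D11 D12 D13 D21 D22 D23 D31 D32 D33 : R :=
  (a1*D11 + a2*D21 + a3*D31)*a1 + (a1*D12 + a2*D22 + a3*D32)*a2
  + (a1*D13 + a2*D23 + a3*D33)*a3 + conn_form lam beta a1 a2 a3 v1 v2 v3.

(* Trace over the orthonormal pair e1 = (Q,-P,0), e2 = (tP,tQ,-s) completing the
   unit vector v = (sP,sQ,t): if v has constant length (Dv.v = 0) the result is
   the divergence D11 + D22 + D33, the conn_form contributions cancelling. *)
Lemma trace_diag_term P Q s t lam beta D11 D12 D13 D21 D22 D23 D31 D32 D33 :
  P*P + Q*Q = 1 -> s*s + t*t = 1 -> lam <> 0 ->
  (s*P)*D11 + (s*Q)*D12 + t*D13 = 0 ->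
  (s*P)*D21 + (s*Q)*D22 + t*D23 = 0 ->
  (s*P)*D31 + (s*Q)*D32 + t*D33 = 0 ->
  diag_term lam beta Q (-P) 0 (s*P) (s*Q) t D11 D12 D13 D21 D22 D23 D31 D32 D33
  + diag_term lam beta (t*P) (t*Q) (-s) (s*P) (s*Q) t D11 D12 D13 D21 D22 D23 D31 D32 D33
  = D11 + D22 + D33.
Proof.
  intros HPQ Hst Hlam h1 h2 h3.
  set (mu := (lam + / lam) / 2).
  set (c12 := (1 - beta) * / lam * t).
  set (c13 := ((1 - beta) * lam + beta * mu) * (s*Q)).
  set (c23 := - (2 - beta) * mu * (s*P)).
  assert (As_quad : forall a1 a2 a3,
    diag_term lam beta a1 a2 a3 (s*P) (s*Q) t D11 D12 D13 D21 D22 D23 D31 D32 D33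
    = quad D11 (D21 + c12) (D31 + c13) D12 D22 (D32 + c23) D13 D23 D33 a1 a2 a3).
  { intros. unfold diag_term, quad, conn_form, c12, c13, c23, mu. ring. }
  rewrite !As_quad.
  rewrite (quad_trace_orthonormal _ _ _ _ _ _ _ _ _ Q (-P) 0 (t*P) (t*Q) (-s) (s*P) (s*Q) t).
  - (* Q(v) = (Dv).v + v1 v2 v3 ((1-beta)(lam + 1/lam) - 2 (1-beta) mu) and mu = (lam + 1/lam)/2 *)
    unfold quad.
    transitivity (D11 + D22 + D33 - ((s*P) * ((s*P)*D11 + (s*Q)*D12 + t*D13)
        + (s*Q) * ((s*P)*D21 + (s*Q)*D22 + t*D23) + t * ((s*P)*D31 + (s*Q)*D32 + t*D33))).
    + unfold c12, c13, c23, mu. field. exact Hlam.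
    + rewrite h1, h2, h3. ring.
  - replace (Q*Q + t*P*(t*P) + s*P*(s*P)) with (Q*Q + P*P*(s*s+t*t)) by ring.
    rewrite Hst. lra.
  - replace (-P*-P + t*Q*(t*Q) + s*Q*(s*Q)) with (P*P + Q*Q*(s*s+t*t)) by ring.
    rewrite Hst. lra.
  - lra.
  - replace (Q*-P + t*P*(t*Q) + s*P*(s*Q)) with (P*Q*(s*s+t*t-1)) by ring.
    rewrite Hst. ring.
  - ring.
  - ring.
Qed.

(* The X3-derivative of u; the quantity r of the paper is L^{-1/2} times it. *)
Definition su (u : pt -> R) : pt -> R := act X3 u.

Section FrameDerivativesInCoordinates.
Transparent act.

Lemma pp_coord u : pp u = fun y => partial 3 u y.
Proof. apply functional_extensionality; intros [[y1 y2] y3]. unfold pp, act. unfold_frame. ring. Qed.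
Lemma qq_coord u : qq u = fun y =>
  (- exp (c3 y) / sqrt 2) * partial 1 u y + (exp (- c3 y) / sqrt 2) * partial 2 u y.
Proof. apply functional_extensionality; intros [[y1 y2] y3]. unfold qq, act. unfold_frame. ring. Qed.

Lemma su_coord u : su u = fun y =>
  (- exp (c3 y) / sqrt 2) * partial 1 u y + (- exp (- c3 y) / sqrt 2) * partial 2 u y.
Proof. apply functional_extensionality; intros [[y1 y2] y3]. unfold su, act. unfold_frame. ring. Qed.

Lemma rr_su L u : rr L u = fun y => / sqrt L * su u y.
Proof. apply functional_extensionality; intros [[y1 y2] y3]. unfold rr, su, act. unfold_frame. ring. Qed.

Lemma act_X3t L f x : act (X3t L) f x = / sqrt L * act X3 f x.
Proof. destruct x as [[y1 y2] y3]. unfold act. unfold_frame. ring. Qed.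

End FrameDerivativesInCoordinates.

Section SurfaceQuantities.
Variables (u : pt -> R) (x : pt).
Hypothesis Hd2 : forall k, (1 <= k <= 3)%nat -> has_partials x (partial k u).

Lemma has_partials_pp : has_partials x (pp u).
Proof. rewrite pp_coord. apply Hd2. lia. Qed.

Lemma has_partials_qq : has_partials x (qq u).
Proof.
  pose proof (Hd2 1 ltac:(lia)). pose proof (Hd2 2 ltac:(lia)).
  rewrite qq_coord. smooth_tac; nonzero_tac.
Qed.

Lemma has_partials_su : has_partials x (su u).
Proof.
  pose proof (Hd2 1 ltac:(lia)). pose proof (Hd2 2 ltac:(lia)).
  rewrite su_coord. smooth_tac; nonzero_tac.
Qed.

Lemma has_partials_rr L : has_partials x (rr L u).
Proof. pose proof has_partials_su. rewrite rr_su. smooth_tac. Qed.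

(* Non-characteristic means that the horizontal gradient does not vanish. *)
Hypothesis Hnc : ~ (pp u x = 0 /\ qq u x = 0).

Lemma hgrad_sq_pos : 0 < pp u x ^ 2 + qq u x ^ 2.
Proof.
  destruct (Req_dec (pp u x) 0) as [E|E].
  - assert (qq u x <> 0) by tauto. rewrite E.
    assert (0 < qq u x ^ 2) by (apply pow2_gt_0; auto). lra.
  - assert (0 < pp u x ^ 2) by (apply pow2_gt_0; auto).
    assert (0 <= qq u x ^ 2) by apply pow2_ge_0. lra.
Qed.

Lemma grad_sq_pos L : 0 < pp u x ^ 2 + qq u x ^ 2 + rr L u x ^ 2.
Proof. pose proof hgrad_sq_pos. assert (0 <= rr L u x ^ 2) by apply pow2_ge_0. lra. Qed.

Lemma ll_pos : 0 < ll u x.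
Proof. apply sqrt_lt_R0, hgrad_sq_pos. Qed.

Lemma lL_pos L : 0 < lL L u x.
Proof. apply sqrt_lt_R0, grad_sq_pos. Qed.

Lemma ll_sq : ll u x * ll u x = pp u x ^ 2 + qq u x ^ 2.
Proof. apply sqrt_sqrt. pose proof hgrad_sq_pos. lra. Qed.

Lemma lL_sq L : lL L u x * lL L u x = pp u x ^ 2 + qq u x ^ 2 + rr L u x ^ 2.
Proof. apply sqrt_sqrt. pose proof (grad_sq_pos L). lra. Qed.

Lemma has_partials_ll : has_partials x (ll u).
Proof.
  pose proof has_partials_pp; pose proof has_partials_qq.
  apply has_partials_sqrt; [smooth_tac | apply hgrad_sq_pos].
Qed.

Lemma has_partials_lL L : has_partials x (lL L u).
Proof.
  pose proof has_partials_pp; pose proof has_partials_qq; pose proof (has_partials_rr L).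
  apply has_partials_sqrt; [smooth_tac | apply grad_sq_pos].
Qed.

Lemma act_ll V : act V (ll u) x = (pp u x * act V (pp u) x + qq u x * act V (qq u) x) / ll u x.
Proof.
  pose proof has_partials_pp; pose proof has_partials_qq; pose proof ll_pos.
  unfold ll at 1. rewrite act_sqrt by (smooth_tac || apply hgrad_sq_pos).
  rewrite !act_plus, !act_sq by smooth_tac. fold (ll u x). field. lra.
Qed.

Lemma act_lL L V : act V (lL L u) x =
  (pp u x * act V (pp u) x + qq u x * act V (qq u) x + rr L u x * act V (rr L u) x) / lL L u x.
Proof.
  pose proof has_partials_pp; pose proof has_partials_qq; pose proof (has_partials_rr L).
  pose proof (lL_pos L).
  unfold lL at 1. rewrite act_sqrt by (smooth_tac || apply grad_sq_pos).
  rewrite !act_plus, !act_sq by smooth_tac. fold (lL L u x). field. lra.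
Qed.

End SurfaceQuantities.

Lemma e1_frame L u : e1 u = frame L (qbar u) (fun y => - pbar u y) (fun _ => 0).
Proof. apply functional_extensionality; intros [[y1 y2] y3]; apply pt_eq; unfold e1; unfold_frame; ring. Qed.

Section MeanCurvatureDivergence.
Variables (u : pt -> R) (x : pt) (L : R).
Hypothesis Hd2 : forall k, (1 <= k <= 3)%nat -> has_partials x (partial k u).
Hypothesis Hnc : ~ (pp u x = 0 /\ qq u x = 0).
Hypothesis HL : 0 < L.

Let Hpp := has_partials_pp u x Hd2.
Let Hqq := has_partials_qq u x Hd2.
Let Hrr := has_partials_rr u x Hd2 L.
Let Hll := has_partials_ll u x Hd2 Hnc.
Let HlL := has_partials_lL u x Hd2 Hnc L.
Let Hll_pos := ll_pos u x Hnc.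
Let HlL_pos := lL_pos u x Hnc L.

(* v_L has unit length, so each derivative of it is orthogonal to it. *)
Lemma vL_unit_deriv V :
  pbarL L u x * act V (pbarL L u) x + qbarL L u x * act V (qbarL L u) x
  + rbarL L u x * act V (rbarL L u) x = 0.
Proof.
  unfold pbarL, qbarL, rbarL. rewrite !act_div by (auto; lra). rewrite !act_lL by auto.
  pose proof (lL_sq u x Hnc L) as Hl.
  set (l := lL L u x) in *. set (A := pp u x) in *. set (B := qq u x) in *.
  set (C := rr L u x) in *.
  set (a := act V (pp u) x). set (b := act V (qq u) x). set (c := act V (rr L u) x).
  transitivity ((A*a + B*b + C*c) * (l*l - (A^2+B^2+C^2)) / l^4).
  - field. lra.
  - rewrite Hl. field. lra.
Qed.

Lemma meanH_divergence beta : meanH L beta u x =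
  act X1 (pbarL L u) x + act X2 (qbarL L u) x + act (X3t L) (rbarL L u) x.
Proof.
  assert (HsL : 0 < sqrt L) by (apply sqrt_lt_R0; auto).
  assert (has_partials x (pbar u)) by (unfold pbar; smooth_tac; lra).
  assert (has_partials x (qbar u)) by (unfold qbar; smooth_tac; lra).
  assert (has_partials x (pbarL L u)) by (unfold pbarL; smooth_tac; lra).
  assert (has_partials x (qbarL L u)) by (unfold qbarL; smooth_tac; lra).
  assert (has_partials x (rbarL L u)) by (unfold rbarL; smooth_tac; lra).
  unfold meanH. rewrite (e1_frame L).
  change (e2 L u) with (frame L (fun y => rbarL L u y * pbar u y)
    (fun y => rbarL L u y * qbar u y) (fun y => - (ll u y / lL L u y))).
  change (vL L u) with (frame L (pbarL L u) (qbarL L u) (rbarL L u)).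
  rewrite !nabla1b_diag by (auto; smooth_tac; nonzero_tac). rewrite !act_frame.
  pose proof (vL_unit_deriv X1) as V1. pose proof (vL_unit_deriv X2) as V2.
  pose proof (vL_unit_deriv (X3t L)) as V3.
  (* in the notation of [trace_diag_term]: v_L = (sP, sQ, t), Dij = X_i(v_j) *)
  set (P := pbar u x) in *. set (Q := qbar u x) in *.
  set (s := ll u x / lL L u x) in *. set (t := rbarL L u x) in *.
  assert (EP : pbarL L u x = s * P) by (unfold s, P, pbarL, pbar; field; lra).
  assert (EQ : qbarL L u x = s * Q) by (unfold s, Q, qbarL, qbar; field; lra).
  assert (HPQ : P * P + Q * Q = 1).
  { unfold P, Q, pbar, qbar. pose proof (ll_sq u x Hnc) as E.
    transitivity ((pp u x ^ 2 + qq u x ^ 2) / (ll u x * ll u x)).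
    - field. lra.
    - rewrite <- E. field. lra. }
  assert (Hst : s * s + t * t = 1).
  { unfold s, t, rbarL. pose proof (ll_sq u x Hnc) as E. pose proof (lL_sq u x Hnc L) as E'.
    transitivity ((ll u x * ll u x + rr L u x ^ 2) / (lL L u x * lL L u x)).
    - field. lra.
    - rewrite E, <- E'. field. lra. }
  rewrite EP, EQ in *.
  rewrite <- (trace_diag_term P Q s t (sqrt L) beta _ _ _ _ _ _ _ _ _
                HPQ Hst (Rgt_not_eq _ _ HsL) V1 V2 V3).
  unfold diag_term. ring.
Qed.

End MeanCurvatureDivergence.

(* The mean curvature as a function of t = 1/L: the quotient rule applied to
   X1(p/l) + X2(q/l) + t X3(s/l), where l = sqrt(p^2 + q^2 + t s^2) and
   (p_i, q_i, s_i) are the X_i-derivatives of p, q and s = X3(u). *)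
Definition profile (p q s p1 q1 s1 p2 q2 s2 p3 q3 s3 t : R) : R :=
  (p1 * sqrt (p^2 + q^2 + t * s^2)
     - p * ((p * p1 + q * q1 + t * s * s1) / sqrt (p^2 + q^2 + t * s^2)))
    / (sqrt (p^2 + q^2 + t * s^2))^2
  + (q2 * sqrt (p^2 + q^2 + t * s^2)
     - q * ((p * p2 + q * q2 + t * s * s2) / sqrt (p^2 + q^2 + t * s^2)))
    / (sqrt (p^2 + q^2 + t * s^2))^2
  + t * ((s3 * sqrt (p^2 + q^2 + t * s^2)
          - s * ((p * p3 + q * q3 + t * s * s3) / sqrt (p^2 + q^2 + t * s^2)))
         / (sqrt (p^2 + q^2 + t * s^2))^2).

Section Limit.
Variables (u : pt -> R) (x : pt).
Hypothesis Hd2 : forall k, (1 <= k <= 3)%nat -> has_partials x (partial k u).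
Hypothesis Hnc : ~ (pp u x = 0 /\ qq u x = 0).

Definition H_profile : R -> R :=
  profile (pp u x) (qq u x) (su u x)
    (act X1 (pp u) x) (act X1 (qq u) x) (act X1 (su u) x)
    (act X2 (pp u) x) (act X2 (qq u) x) (act X2 (su u) x)
    (act X3 (pp u) x) (act X3 (qq u) x) (act X3 (su u) x).

Lemma meanH_profile L beta : 0 < L -> meanH L beta u x = H_profile (/ L).
Proof.
  intros HL.
  pose proof (has_partials_pp u x Hd2). pose proof (has_partials_qq u x Hd2).
  pose proof (has_partials_su u x Hd2). pose proof (has_partials_rr u x Hd2 L).
  pose proof (has_partials_lL u x Hd2 Hnc L). pose proof (lL_pos u x Hnc L).
  assert (HsL : 0 < sqrt L) by (apply sqrt_lt_R0; auto).
  pose proof (sqrt_sqrt L ltac:(lra)) as EL.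
  assert (Hl : lL L u x = sqrt (pp u x ^ 2 + qq u x ^ 2 + / L * su u x ^ 2)).
  { unfold lL. rewrite rr_su. f_equal. set (sL := sqrt L) in *. rewrite <- EL. field. lra. }
  rewrite (meanH_divergence u x L Hd2 Hnc HL), act_X3t.
  unfold pbarL, qbarL, rbarL. rewrite !act_div by (auto; lra).
  rewrite !act_lL, rr_su by auto. rewrite !act_mult, !act_const by smooth_tac.
  unfold H_profile, profile. rewrite <- Hl.
  set (l := lL L u x) in *. set (sL := sqrt L) in *. rewrite <- EL. field. lra.
Qed.

Lemma H_profile_at_0 : H_profile 0 = act X1 (pbar u) x + act X2 (qbar u) x.
Proof.
  pose proof (has_partials_pp u x Hd2). pose proof (has_partials_qq u x Hd2).
  pose proof (has_partials_ll u x Hd2 Hnc). pose proof (ll_pos u x Hnc).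
  unfold pbar, qbar. rewrite !act_div by (auto; lra). rewrite !act_ll by auto.
  unfold H_profile, profile. rewrite !Rmult_0_l, !Rplus_0_r. fold (ll u x).
  field. lra.
Qed.

(* Differentiable, hence continuous, at t = 0 because p^2 + q^2 > 0. *)
Lemma H_profile_continuous : continuous H_profile 0.
Proof.
  apply (ex_derive_continuous (K := R_AbsRing) (V := R_NormedModule)).
  pose proof (hgrad_sq_pos u x Hnc) as Hpos.
  unfold H_profile, profile.
  set (p := pp u x) in *. set (q := qq u x) in *. set (s := su u x).
  assert (Hpos' : 0 < p * (p * 1) + q * (q * 1) + 0 * (s * (s * 1))) by (simpl in Hpos; lra).
  assert (0 < sqrt (p * (p * 1) + q * (q * 1) + 0 * (s * (s * 1)))) by (apply sqrt_lt_R0; auto).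
  auto_derive.
  repeat split; try lra; apply Rgt_not_eq; repeat apply Rmult_lt_0_compat; lra.
Qed.

End Limit.

Lemma is_lim_inv_p_infty : is_lim (fun L => / L) p_infty 0.
Proof.
  pose proof (is_lim_inv (fun y => y) p_infty p_infty (is_lim_id _)) as Hi.
  simpl in Hi. apply Hi. discriminate.
Qed.

Theorem proposition4p7 (beta : R) (U : pt -> Prop) (u : pt -> R) :
  open U ->
  C2_on U u ->
  compact_set (fun x => U x /\ u x = 0) ->
  (forall x, U x -> u x = 0 -> egrad_nonzero u x) ->
  forall x : pt, U x -> u x = 0 ->
    ~ (pp u x = 0 /\ qq u x = 0) ->
    is_lim (fun L => meanH L beta u x) p_infty
      (act X1 (pbar u) x + act X2 (qbar u) x).
Proof.
  intros _ HC _ _ x HU _ Hnc.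
  pose proof (C2_on_partials U u x HC HU) as Hd2.
  rewrite <- (H_profile_at_0 u x Hd2 Hnc).
  apply is_lim_ext_loc with (f := fun L => H_profile u x (/ L)).
  - exists 0. intros L HL. symmetry. apply (meanH_profile u x Hd2 Hnc); auto.
  - apply (is_lim_comp_continuous (fun L => / L) (H_profile u x) p_infty 0).
    + exact is_lim_inv_p_infty.
    + exact (H_profile_continuous u x Hnc).
Qed.
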